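(* Let $\mathbb{Z}[t]^o$ denote the submodule of $\mathrm{Hom}_{\mathbb{Z}}(\mathbb{Z}[t],\mathbb{Z})$ consisting of those $f$ whose kernel contains an ideal $I$ of $\mathbb{Z}[t]$ with $\mathbb{Z}[t]/I$ a free $\mathbb{Z}$-module of finite rank; identifying $f$ with the sequence $(f_n)_{n\ge 0}$, $f_n=f(t^n)$, $\mathbb{Z}[t]^o$ is exactly the module of integral linear recursive sequences, and it carries the co-ring structure dual to the multiplication of $\mathbb{Z}[t]$. Let $\pi:\mathbb{Z}[t]^o\to\mathbb{Z}$, $\pi(f)=f_1$ (dual to $\mathbb{Z}\hookrightarrow\mathbb{Z}[t]$, $a\mapsto at$). Then the cofree bi-ring on the ring $\mathbb{Z}$ (the value at $\mathbb{Z}$ of the right adjoint of the forgetful functor from bi-rings to rings, which coincides with the value at $\mathbb{Z}$ of the right adjoint of the forgetful functor from commutative cocommutative bi-rings to commutative rings) is $\mathbb{Z}[t]^o$ with this co-ring structure, and its ring structure — the unique one making $\pi$ a ring homomorphism compatible with the universal property — is the Hadamard product $(f\cdot g)_n=f_n g_n$ with unit the constant sequence $(1,1,1,\dots)$. In other words, the coordinate bi-ring of $\mathrm{Spec}(\mathbb{Z})/\mathbb{F}_1$ is the co-ring of integral linear recursive sequences equipped with the Hadamard product.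
   Context: Rings, co-rings and bi-rings are over $\mathbb{Z}$ with torsion-free underlying modules; a bi-ring is a torsion-free $\mathbb{Z}$-bialgebra (ring and co-ring such that comultiplication and counit are ring maps). An integral linear recursive sequence is a sequence $(f_n)_{n\ge0}$ of integers for which there exist $r>0$ and $a_1,\dots,a_r\in\mathbb{Z}$ with $f_n=a_1f_{n-1}+\dots+a_rf_{n-r}$ for all $n\ge r$. The co-ring structure on $\mathbb{Z}[t]^o$ is the direct limit of the duals of the rings $\mathbb{Z}[t]/(m(t))$, $m$ monic. The paper proposes that $\mathbb{F}_1$-algebras are bi-rings, the co-ring structure being descent data from $\mathbb{Z}$ to $\mathbb{F}_1$, and the coordinate bi-ring of $\mathrm{Spec}(\mathbb{Z})/\mathbb{F}_1$ is by definition the cofree bi-ring on $\mathbb{Z}$ (right adjoint of the forgetful functor applied to $\mathbb{Z}$). *)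

From HB Require Import structures.
From mathcomp Require Import all_boot all_order all_algebra.
Set Implicit Arguments. Unset Strict Implicit. Unset Printing Implicit Defensive.
Import Order.TTheory GRing.Theory Num.Theory.
Local Open Scope ring_scope.

(* Two formal sums  sum_i x_i (x) y_i  represent the same element of V (x)_Z V
   iff they agree under every biadditive map to every abelian group
   (universal property of the tensor product). *)
Definition biadditive (V M : zmodType) (b : V -> V -> M) : Prop :=
  (forall x y z, b (x + y) z = b x z + b y z) /\
  (forall x y z, b x (y + z) = b x y + b x z).

Definition teq2 (V : zmodType) (s t : seq (V * V)) : Prop :=
  forall (M : zmodType) (b : V -> V -> M), biadditive b ->
    \sum_(p <- s) b p.1 p.2 = \sum_(p <- t) b p.1 p.2.

Definition triadditive (V M : zmodType) (b : V -> V -> V -> M) : Prop :=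
  (forall x x' y z, b (x + x') y z = b x y z + b x' y z) /\
  (forall x y y' z, b x (y + y') z = b x y z + b x y' z) /\
  (forall x y z z', b x y (z + z') = b x y z + b x y z').

Definition teq3 (V : zmodType) (s t : seq (V * V * V)) : Prop :=
  forall (M : zmodType) (b : V -> V -> V -> M), triadditive b ->
    \sum_(p <- s) b p.1.1 p.1.2 p.2 = \sum_(p <- t) b p.1.1 p.1.2 p.2.

(* D x is a representative (formal sum of pure tensors) of Delta(x). *)
Definition biring_axioms (B : pzRingType) (D : B -> seq (B * B)) (e : B -> int)
  : Prop :=
  [/\
      forall (x : B) (n : nat), (0 < n)%N -> x *+ n = 0 -> x = 0,
      (forall x y, e (x + y) = e x + e y) /\ e 1 = 1 /\
      (forall x y, e (x * y) = e x * e y),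
      (forall x y, teq2 (D (x + y)) (D x ++ D y)) /\
      teq2 (D 1) [:: (1, 1)] /\
      (forall x y, teq2 (D (x * y))
                        [seq (p.1 * q.1, p.2 * q.2) | p <- D x, q <- D y]),
      forall x, \sum_(p <- D x) (p.2 *~ e p.1) = x /\
                \sum_(p <- D x) (p.1 *~ e p.2) = x
    &
      forall x, teq3 [seq (q.1, q.2, p.2) | p <- D x, q <- D p.1]
                     [seq (p.1, q.1, q.2) | p <- D x, q <- D p.2]].

Record biring := BiRing {
  br_ring :> pzRingType;
  br_D : br_ring -> seq (br_ring * br_ring);
  br_e : br_ring -> int;
  br_ax : biring_axioms br_D br_e }.

Definition ring_hom_to_Z (B : pzRingType) (phi : B -> int) : Prop :=
  (forall x y, phi (x + y) = phi x + phi y) /\ phi 1 = 1 /\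
  (forall x y, phi (x * y) = phi x * phi y).

Definition biring_hom (B C : biring) (f : B -> C) : Prop :=
  [/\ forall x y : B, f (x + y) = f x + f y,
      f 1 = 1,
      forall x y : B, f (x * y) = f x * f y,
      forall x : B, @br_e C (f x) = @br_e B x
    & forall x : B, teq2 (@br_D C (f x)) [seq (f p.1, f p.2) | p <- @br_D B x]].

(* the linear form on Z[t] attached to a sequence: f(t^n) = f_n *)
Definition seq_pair (f : nat -> int) (p : {poly int}) : int :=
  \sum_(i < size p) p`_i * f i.

Definition is_ideal (I : {poly int} -> Prop) : Prop :=
  [/\ I 0, (forall p q, I p -> I q -> I (p + q)) & (forall p q, I q -> I (p * q))].

(* Z[t]/I is a free Z-module of finite rank n, with basis the classes of e_i *)
Definition free_finite_quotient (I : {poly int} -> Prop) : Prop :=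
  exists (n : nat) (e : 'I_n -> {poly int}),
    forall p : {poly int}, exists! c : {ffun 'I_n -> int},
      I (p - \sum_(i < n) c i *: e i).

Definition ZtO (f : nat -> int) : Prop :=
  exists I : {poly int} -> Prop,
    [/\ is_ideal I, free_finite_quotient I & forall p, I p -> seq_pair f p = 0].

Definition linrec (f : nat -> int) : Prop :=
  exists (r : nat) (a : 'I_r -> int), (0 < r)%N /\
    forall n, (r <= n)%N -> f n = \sum_(i < r) a i * f (n - i.+1)%N.

(* A sequence f lies in Z[t]^o iff some monic m annihilates it under the pairing
   f(t^n) = f_n: the ideal of a finite free quotient contains the characteristic
   polynomial of multiplication by t (determinant trick), and conversely
   Z[t]/(m) is free on 1, ..., t^(deg m - 1).  Being annihilated by a monic m is
   exactly linear recursiveness, and then f = \sum_(l < deg m) f_l delta_l with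
   delta_l(n) the l-th coefficient of t^n mod m; applied to the shifts of f this
   gives the comultiplication f_(i+j) = \sum_l f_(i+l) delta_l(j).  Since all the
   sequences involved in a tensor identity lie in the span of the delta_l of a
   common monic annihilator, tensor identities in L (x) L can be checked on the
   functionals (f, g) |-> f_i g_j.
   Hadamard products stay linear recursive because a sequence whose shifts lie
   in a finitely generated Z-module is linear recursive (Z^K is Noetherian).
   For cofreeness, a ring map phi : B -> Z yields the convolution powers
   Phi_n = phi^{*n} (Phi_0 = counit) with Phi_(i+j)(x) = \sum Phi_i(x') Phi_j(x''),
   so n |-> Phi_n(x) is linear recursive and x |-> Phi(x) is a bi-ring map; any
   bi-ring map Psi with Psi(b)_1 = phi b satisfies the same recursion. *)

From HB Require Import structures.
From mathcomp Require Import all_boot all_order all_algebra.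
From mathcomp Require Import boolp zify ring.
Import Order.TTheory GRing.Theory Num.Theory.
Local Open Scope ring_scope.
Set Implicit Arguments. Unset Strict Implicit. Unset Printing Implicit Defensive.

Section AdditiveMaps.
Variables (U V : zmodType) (F : U -> V).
Hypothesis F_add : {morph F : x y / x + y}.

Lemma additive0 : F 0 = 0.
Proof. by apply: (addrI (F 0)); rewrite -F_add !addr0. Qed.

Lemma additiveN x : F (- x) = - F x.
Proof. by apply: (addrI (F x)); rewrite -F_add !subrr additive0. Qed.

Lemma additive_sum (I : Type) (r : seq I) (P : pred I) (E : I -> U) :
  F (\sum_(i <- r | P i) E i) = \sum_(i <- r | P i) F (E i).
Proof. exact: (big_morph F F_add additive0). Qed.

Lemma additiveMn x k : F (x *+ k) = F x *+ k.
Proof. by elim: k => [|k IH]; rewrite ?mulr0n ?additive0 // !mulrS F_add IH. Qed.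

Lemma additiveMz x c : F (x *~ c) = F x *~ c.
Proof. by case: c => k; rewrite ?NegzE ?mulrNz ?additiveN additiveMn. Qed.

End AdditiveMaps.

Definition shift (k : nat) (f : nat -> int) : nat -> int := fun j => f (k + j)%N.

Section Pairing.
Implicit Types (f g : nat -> int) (p q : {poly int}).

Lemma seq_pair_widen f p n : (size p <= n)%N ->
  seq_pair f p = \sum_(i < n) p`_i * f i.
Proof.
move=> le_p_n; rewrite /seq_pair -(subnKC le_p_n) big_split_ord /=.
rewrite [X in _ + X]big1 ?addr0 // => i _.
by rewrite nth_default ?mul0r // leq_addr.
Qed.

Lemma seq_pairD f p q : seq_pair f (p + q) = seq_pair f p + seq_pair f q.
Proof.
set n := maxn (size p) (size q).
rewrite (@seq_pair_widen f (p + q) n) ?(leq_trans (size_polyD _ _)) //.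
rewrite (@seq_pair_widen f p n) ?leq_maxl // (@seq_pair_widen f q n) ?leq_maxr //.
by rewrite -big_split /=; apply: eq_bigr => i _; rewrite coefD mulrDl.
Qed.

Lemma seq_pair0 f : seq_pair f 0 = 0.
Proof. by rewrite /seq_pair size_poly0 big_ord0. Qed.

Lemma seq_pairZ f c p : seq_pair f (c *: p) = c * seq_pair f p.
Proof.
rewrite (@seq_pair_widen f (c *: p) (size p)) ?size_scale_leq // /seq_pair.
by rewrite mulr_sumr; apply: eq_bigr => i _; rewrite coefZ mulrA.
Qed.

Lemma seq_pairB f p q : seq_pair f (p - q) = seq_pair f p - seq_pair f q.
Proof. by rewrite seq_pairD -scaleN1r seq_pairZ mulN1r. Qed.

Lemma seq_pair_sum f (I : Type) (r : seq I) (P : pred I) (F : I -> {poly int}) :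
  seq_pair f (\sum_(i <- r | P i) F i) = \sum_(i <- r | P i) seq_pair f (F i).
Proof. exact: (big_morph _ (seq_pairD f) (seq_pair0 f)). Qed.

Lemma seq_pairXn f n : seq_pair f 'X^n = f n.
Proof.
rewrite /seq_pair size_polyXn big_ord_recr /= coefXn eqxx mul1r big1 ?add0r //.
by move=> i _; rewrite coefXn (ltn_eqF (ltn_ord i)) mul0r.
Qed.

Lemma seq_pair_addf f g p :
  seq_pair (fun i => f i + g i) p = seq_pair f p + seq_pair g p.
Proof. by rewrite /seq_pair -big_split /=; apply: eq_bigr => i _; rewrite mulrDr. Qed.

Lemma seq_pair_mulXn f k p : seq_pair f ('X^k * p) = seq_pair (shift k f) p.
Proof.
rewrite -[p in LHS]coefK poly_def mulr_sumr seq_pair_sum.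
by apply: eq_bigr => i _; rewrite -scalerAr -exprD seq_pairZ seq_pairXn.
Qed.

End Pairing.

Definition ann (m : {poly int}) (f : nat -> int) := forall q, seq_pair f (q * m) = 0.

Definition monic_rec (f : nat -> int) := exists2 m : {poly int}, m \is monic & ann m f.

Section Annihilators.
Implicit Types (f : nat -> int) (m p : {poly int}).

Lemma annP m f : (forall j, seq_pair f ('X^j * m) = 0) -> ann m f.
Proof.
move=> H q; rewrite -[q]coefK poly_def mulr_suml seq_pair_sum big1 // => j _.
by rewrite -scalerAl seq_pairZ H mulr0.
Qed.

Lemma ann_mull m q f : ann m f -> ann (q * m) f.
Proof. by move=> H p; rewrite mulrA H. Qed.

Lemma ann_mulr m q f : ann m f -> ann (m * q) f.
Proof. by rewrite mulrC; apply: ann_mull. Qed.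

Lemma ann_shift m f k : ann m f -> ann m (shift k f).
Proof. by move=> H q; rewrite -seq_pair_mulXn mulrA H. Qed.

Lemma monic_rec_shift k f : monic_rec f -> monic_rec (shift k f).
Proof. by case=> m mm H; exists m => //; apply: ann_shift. Qed.

Lemma monic_rec_add f g : monic_rec f -> monic_rec g -> monic_rec (fun j => f j + g j).
Proof.
case=> m1 m1m H1 [m2 m2m H2]; exists (m1 * m2); first by rewrite monicMl.
by move=> q; rewrite seq_pair_addf (ann_mulr _ H1) (ann_mull _ H2) addr0.
Qed.

Lemma monic_rec_opp f : monic_rec f -> monic_rec (fun j => - f j).
Proof.
case=> m mm H; exists m => // q.
have -> : seq_pair (fun j => - f j) (q * m) = - seq_pair f (q * m).
  by rewrite /seq_pair -sumrN; apply: eq_bigr => i _; rewrite mulrN.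
by rewrite H oppr0.
Qed.

Lemma monic_rec0 : monic_rec (fun _ => 0).
Proof. by exists 1 => [|q]; rewrite ?monic1 // /seq_pair big1 // => i _; rewrite mulr0. Qed.

Section MonicAnnihilator.
Variables (m : {poly int}) (m_monic : m \is monic).
Local Notation r := (size m).-1.

Lemma size_rmodp_monic p : (size (Pdiv.Ring.rmodp p m) <= r)%N.
Proof.
have m_neq0 := monic_neq0 m_monic.
by rewrite -ltnS prednK ?Pdiv.Ring.ltn_rmodpN0 // lt0n size_poly_eq0.
Qed.

Lemma ann_rmodp f p : ann m f -> seq_pair f p = seq_pair f (Pdiv.Ring.rmodp p m).
Proof. by move=> H; rewrite {1}(Pdiv.RingMonic.rdivp_eq m_monic p) seq_pairD H add0r. Qed.

Definition rmodp_coef (l i : nat) : int := (Pdiv.Ring.rmodp 'X^i m)`_l.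

Lemma seq_pair_rmodp_coef l p : seq_pair (rmodp_coef l) p = (Pdiv.Ring.rmodp p m)`_l.
Proof.
rewrite -[p in RHS]coefK poly_def Pdiv.RingMonic.rmodp_sum // coef_sum.
by apply: eq_bigr => i _; rewrite Pdiv.RingMonic.rmodpZ // coefZ.
Qed.

Lemma ann_rmodp_coef l : ann m (rmodp_coef l).
Proof. by move=> q; rewrite seq_pair_rmodp_coef Pdiv.RingMonic.rmodp_mull // coef0. Qed.

Lemma ann_expand f : ann m f -> forall i, f i = \sum_(l < r) f l * rmodp_coef l i.
Proof.
move=> H i; rewrite -seq_pairXn (ann_rmodp _ H) (seq_pair_widen _ (size_rmodp_monic _)).
by apply: eq_bigr => l _; rewrite mulrC.
Qed.

End MonicAnnihilator.

Lemma linrec_monic_rec f : linrec f -> monic_rec f.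
Proof.
case=> r [a [r_gt0 Hf]].
pose s : {poly int} := \sum_(i < r) a i *: 'X^(r - i.+1).
have size_s : (size s < r.+1)%N.
  apply: (leq_trans (size_sum _ _ _)); apply/bigmax_leqP => i _.
  by apply: (leq_trans (size_scale_leq _ _)); rewrite size_polyXn; lia.
exists ('X^r - s).
  by rewrite monicE lead_coefDl ?lead_coefXn // size_polyXn size_polyN.
apply: annP => j; rewrite seq_pair_mulXn seq_pairB seq_pairXn seq_pair_sum.
rewrite /shift (Hf (j + r)%N) ?leq_addl //; apply/eqP; rewrite subr_eq0; apply/eqP.
apply: eq_bigr => i _; rewrite seq_pairZ seq_pairXn; congr (_ * f _); move: (ltn_ord i); lia.
Qed.

Lemma monic_rec_linrec f : monic_rec f -> linrec f.
Proof.
case=> m mm H.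
have size_m : (0 < size m)%N by rewrite lt0n size_poly_eq0 monic_neq0.
have lead_m : m`_(size m).-1 = 1 by move/monicP: mm; rewrite lead_coefE.
case def_r: (size m).-1 => [|r].
  have m1 : m = 1.
    rewrite (@size1_polyC _ m); last by move: def_r; lia.
    by move: lead_m; rewrite def_r => ->.
  exists 1%N, (fun _ => 0); split => // n _.
  rewrite big1 => [|i _]; last by rewrite mul0r.
  by have := H 'X^n; rewrite m1 mulr1 seq_pairXn.
exists r.+1, (fun i => - m`_(r - i)); split => // n le_r_n.
have := H 'X^(n - r.+1).
rewrite seq_pair_mulXn /seq_pair -(prednK size_m) def_r big_ord_recr /=.
rewrite -def_r lead_m mul1r def_r /shift subnK //.
move/eqP; rewrite addrC addr_eq0 => /eqP ->.
rewrite (reindex_inj rev_ord_inj) /= -sumrN; apply: eq_bigr => i _.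
rewrite mulNr; congr (- (_ * f _)); move: (ltn_ord i); lia.
Qed.

Lemma monic_rec1 : monic_rec (fun _ => 1).
Proof.
apply: linrec_monic_rec; exists 1%N, (fun _ => 1); split => // n _.
by rewrite big_ord1 mul1r.
Qed.

End Annihilators.

Lemma coef_sum_ordX (R : nzRingType) n (c : 'I_n -> R) (k : 'I_n) :
  (\sum_(i < n) c i *: 'X^i)`_k = c k.
Proof.
rewrite coef_sum (bigD1 k) //= coefZ coefXn eqxx mulr1 big1 ?addr0 // => i ik.
by rewrite coefZ coefXn (_ : (k == i :> nat) = false) ?mulr0 //; apply/negbTE; rewrite eq_sym.
Qed.

Lemma size_sum_ordX (R : nzRingType) n (c : 'I_n -> R) :
  (size (\sum_(i < n) c i *: 'X^i)%R <= n)%N.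
Proof.
apply: (leq_trans (size_sum _ _ _)); apply/bigmax_leqP => i _.
by apply: (leq_trans (size_scale_leq _ _)); rewrite size_polyXn.
Qed.

Lemma monic_rec_ZtO f : monic_rec f -> ZtO f.
Proof.
case=> m mm H; have m_neq0 := monic_neq0 mm.
exists (fun p => exists q, p = q * m); split.
- split; first by exists 0; rewrite mul0r.
  + by move=> p q [a ->] [b ->]; exists (a + b); rewrite mulrDl.
  + by move=> p q [a ->]; exists (p * a); rewrite mulrA.
- exists (size m).-1, (fun i => 'X^i) => p.
  exists [ffun i : 'I_(size m).-1 => (Pdiv.Ring.rmodp p m)`_i]; split.
    exists (Pdiv.Ring.rdivp p m); under eq_bigr do rewrite ffunE.
    rewrite -poly_def -/(take_poly _ _) take_poly_id ?size_rmodp_monic //.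
    by rewrite {1}(Pdiv.RingMonic.rdivp_eq mm p) addrK.
  move=> c [q Hq]; apply/ffunP => k; rewrite ffunE.
  have size_c : (size (\sum_(i < (size m).-1) c i *: 'X^i)%R < size m)%N.
    by rewrite (leq_ltn_trans (size_sum_ordX _)) // prednK // lt0n size_poly_eq0.
  have <- : Pdiv.Ring.rmodp (\sum_(i < (size m).-1) c i *: 'X^i) m = Pdiv.Ring.rmodp p m.
    have -> : \sum_(i < (size m).-1) c i *: 'X^i = p - q * m.
      by rewrite -Hq opprB addrC subrK.
    by rewrite Pdiv.RingMonic.rmodpB // Pdiv.RingMonic.rmodp_mull // subr0.
  by rewrite Pdiv.Ring.rmodp_small // coef_sum_ordX.
- by move=> p [q ->]; apply: H.
Qed.

(* The determinant trick: the characteristic polynomial of the matrix of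
   multiplication by 'X on the basis e kills every e k modulo I, hence kills 1. *)
Lemma free_finite_quotient_monic (I : {poly int} -> Prop) :
  is_ideal I -> free_finite_quotient I -> exists2 m : {poly int}, m \is monic & I m.
Proof.
case=> I0 ID IM [n [e He]].
have I_sum (F : 'I_n -> {poly int}) : (forall i, I (F i)) -> I (\sum_i F i).
  by move=> HF; elim/big_ind: _ => //; apply: ID.
have coord p : exists c : {ffun 'I_n -> int}, I (p - \sum_i c i *: e i).
  by case: (He p) => c [Hc _]; exists c.
have [cX HcX] := choice (fun i => coord ('X * e i)).
pose A : 'M[int]_n := \matrix_(i, j) cX i j.
pose E : 'M[{poly int}]_(n, 1) := \col_j e j.
have I_charE k : I ((char_poly_mx A *m E) k 0).
  rewrite /char_poly_mx mulmxBl mul_scalar_mx !mxE.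
  suff -> : \sum_j (A ^ polyC)%sesqui k j * E j 0 = \sum_j cX k j *: e j by [].
  by apply: eq_bigr => j _; rewrite !mxE mul_polyC.
have I_chi_e k : I (char_poly A * e k).
  have <- : (\adj (char_poly_mx A) *m (char_poly_mx A *m E)) k 0 = char_poly A * e k.
    by rewrite mulmxA mul_adj_mx mul_scalar_mx !mxE.
  by rewrite mxE; apply: I_sum => j; apply: IM.
have [c1 Hc1] := coord 1.
exists (char_poly A); first exact: char_poly_monic.
have -> : char_poly A = char_poly A * (1 - \sum_i c1 i *: e i)
                        + \sum_i c1 i *: (char_poly A * e i).
  rewrite mulrBr mulr1 mulr_sumr.
  by under eq_bigr do rewrite -scalerAr; rewrite subrK.
apply: ID; first exact: IM.
by apply: I_sum => i; rewrite -mul_polyC; apply: IM.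
Qed.

Lemma ZtO_monic_rec f : ZtO f -> monic_rec f.
Proof.
case=> I [idI freeI Hf]; have [m mm Im] := free_finite_quotient_monic idI freeI.
by exists m => // q; apply: Hf; case: idI => _ _; apply.
Qed.

Lemma ZtO_linrec f : ZtO f <-> linrec f.
Proof.
split => [/ZtO_monic_rec/monic_rec_linrec // | /linrec_monic_rec/monic_rec_ZtO //].
Qed.

Definition in_zspan (g : nat -> nat -> int) (K : nat) (v : nat -> int) :=
  exists lam : nat -> int, forall j, v j = \sum_(k < K) lam k * g k j.

Section IntegerSpans.
Variable g : nat -> nat -> int.

Lemma in_zspan_gen K k : (k < K)%N -> in_zspan g K (g k).
Proof.
move=> lt_k_K; exists (fun i => (i == k)%:R) => j.
rewrite (bigD1 (Ordinal lt_k_K)) //= eqxx mul1r big1 ?addr0 // => i.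
by rewrite -val_eqE /= => /negbTE ->; rewrite mul0r.
Qed.

Lemma in_zspan_widen K K' v : (K <= K')%N -> in_zspan g K v -> in_zspan g K' v.
Proof.
move=> le_K [lam Hv]; exists (fun k => if (k < K)%N then lam k else 0) => j.
rewrite Hv (big_ord_widen K' (fun k => lam k * g k j) le_K) big_mkcond /=.
by apply: eq_bigr => k _; case: ifP; rewrite ?mul0r.
Qed.

Lemma in_zspan_lincomb K a b u v : in_zspan g K u -> in_zspan g K v ->
  in_zspan g K (fun j => a * u j + b * v j).
Proof.
case=> lu Hu [lv Hv]; exists (fun k => a * lu k + b * lv k) => j.
rewrite Hu Hv !mulr_sumr -big_split /=; apply: eq_bigr => k _.
by rewrite mulrDl !mulrA.
Qed.

Lemma in_zspan_trans (h : nat -> nat -> int) K n v :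
  (forall k, (k < n)%N -> in_zspan g K (h k)) -> in_zspan h n v -> in_zspan g K v.
Proof.
move=> Hh [lam Hv].
suff [mu Hmu] : in_zspan g K (fun j => \sum_(k < n) lam k * h k j).
  by exists mu => j; rewrite Hv Hmu.
elim: n Hh {Hv} => [|n IH] Hh.
  by exists (fun _ => 0) => j; rewrite big_ord0 big1 // => k _; rewrite mul0r.
have := in_zspan_lincomb 1 (lam n) (IH (fun k lt_k => Hh k (ltnW lt_k))) (Hh n (ltnSn n)).
by case=> mu Hmu; exists mu => j; rewrite big_ord_recr /= -Hmu mul1r.
Qed.

End IntegerSpans.

Lemma int_comb_dvd (c : nat -> int) :
  exists N (nu : nat -> int), forall n, ((\sum_(i < N) nu i * c i) %| c n)%Z.
Proof.
pose C (i _ : nat) := c i.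
pose comb (a : int) := exists N, in_zspan C N (fun _ => a).
have comb_c n : comb (c n) by exists n.+1; apply: in_zspan_gen.
have combB a b x : comb a -> comb b -> comb (a - x * b).
  case=> Na Ha [Nb Hb]; exists (maxn Na Nb).
  have [lam Hlam] := in_zspan_lincomb 1 (- x)
    (in_zspan_widen (leq_maxl Na Nb) Ha) (in_zspan_widen (leq_maxr Na Nb) Hb).
  by exists lam => j; rewrite -Hlam mul1r mulNr.
have [ex_pos | no_pos] := pselect (exists k, (0 < k)%N && `[< comb k%:Z >]); last first.
  exists 0%N, (fun _ => 0) => n; rewrite big_ord0 dvd0z; apply/negPn/negP => cn_neq0.
  apply: no_pos; exists `|c n|%N; rewrite absz_gt0 cn_neq0 /=; apply: asboolT.
  have comb0 : comb 0 by exists 0%N, (fun _ => 0) => j; rewrite big_ord0.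
  by have := combB 0 (c n) (- sgz (c n)) comb0 (comb_c n); rewrite abszEsg mulNr opprK add0r.
case: (ex_minnP ex_pos) => k /andP[k_gt0 /asboolP [N [nu Hk]]] k_min.
exists N, nu => n; rewrite -(Hk 0%N); apply/dvdz_mod0P.
have : comb (c n %% k)%Z.
  have -> : (c n %% k)%Z = c n - (c n %/ k)%Z * k.
    by rewrite {2}(divz_eq (c n) k) addrAC subrr add0r.
  by apply: combB => //; exists N, nu.
have k_pos : 0 < k%:Z by rewrite ltz_nat.
have := ltz_pmod (c n) k_pos; have := modz_ge0 (c n) (lt0r_neq0 k_pos).
case: (c n %% k)%Z => // r _; rewrite ltz_nat; case: r => // r lt_r_k comb_r.
by have := k_min r.+1 (asboolT comb_r); rewrite leqNgt lt_r_k.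
Qed.

(* Noetherianity of Z^K, by elimination of the first coordinate: its values
   form an ideal generated by the first coordinate of some combination w. *)
Lemma in_zspan_noetherian K (g F : nat -> nat -> int) :
  (forall n, in_zspan g K (F n)) -> exists m, forall n, in_zspan F m (F n).
Proof.
elim: K g F => [|K IH] g F HF.
  exists 0%N => n; exists (fun _ => 0) => j.
  by case: (HF n) => lam ->; rewrite !big_ord0.
have [L HL] := choice HF.
have [N0 [nu d_dvd]] := int_comb_dvd (fun n => L n 0%N).
pose mu n := (L n 0%N %/ \sum_(i < N0) nu i * L i 0%N)%Z.
pose w j := \sum_(i < N0) nu i * F i j.
pose F' n j := F n j - mu n * w j.
have w_coord j : w j = \sum_(k < K.+1) (\sum_(i < N0) nu i * L i k) * g k j.
  rewrite /w; under eq_bigr do rewrite HL mulr_sumr.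
  rewrite exchange_big /=; apply: eq_bigr => k _; rewrite mulr_suml.
  by apply: eq_bigr => i _; rewrite mulrA.
have F'_span n : in_zspan (fun k => g k.+1) K (F' n).
  exists (fun k => L n k.+1 - mu n * \sum_(i < N0) nu i * L i k.+1) => j.
  rewrite /F' HL w_coord mulr_sumr -sumrB big_ord_recl /=.
  rewrite -{1}[L n 0%N](divzK (d_dvd n)) -/(mu n) mulrA subrr add0r.
  by apply: eq_bigr => k _; rewrite mulrBl mulrA.
have [m' Hm'] := IH _ _ F'_span.
set m := maxn m' N0.
have w_span : in_zspan F m w by apply: (in_zspan_widen (leq_maxr m' N0)); exists nu.
have F'_in n : in_zspan F m (F' n).
  apply: in_zspan_trans (Hm' n) => k lt_k_m'.
  have := in_zspan_lincomb 1 (- mu k) (in_zspan_gen F (leq_trans lt_k_m' (leq_maxl _ _))) w_span.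
  by case=> lam Hlam; exists lam => j; rewrite -Hlam mul1r mulNr.
exists m => n; have [lam Hlam] := in_zspan_lincomb 1 (mu n) (F'_in n) w_span.
by exists lam => j; rewrite -Hlam mul1r subrK.
Qed.

Lemma shifts_in_zspan_linrec f K (g : nat -> nat -> int) :
  (forall i, in_zspan g K (shift i f)) -> linrec f.
Proof.
move=> H; have [m Hm] := in_zspan_noetherian H.
case: (Hm m); case: m {Hm} => [|m] kap Hk.
  exists 1%N, (fun _ => 0); split => // n _.
  rewrite big1 => [|i _]; last by rewrite mul0r.
  by have := Hk n; rewrite big_ord0.
exists m.+1, (fun i => kap (m - i)%N); split => // n le_m_n.
have := Hk (n - m.+1)%N; rewrite /shift subnKC // => ->.
rewrite (reindex_inj rev_ord_inj) /=; apply: eq_bigr => i _.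
congr (kap _ * f _); move: (ltn_ord i) le_m_n; lia.
Qed.

Lemma monic_rec_shifts f : monic_rec f ->
  exists K g, forall i, in_zspan g K (shift i f).
Proof.
case=> m mm H; exists (size m).-1, (rmodp_coef m) => i.
by exists (shift i f); apply: ann_expand (ann_shift i H).
Qed.

Lemma sum_ord_divn_modn (V : nmodType) r1 r2 (F : nat -> nat -> V) :
  \sum_(l < r1) \sum_(l' < r2) F l l' = \sum_(k < r1 * r2) F (k %/ r2)%N (k %% r2)%N.
Proof.
elim: r1 => [|r1 IH]; first by rewrite !big_ord0.
rewrite big_ord_recr /= IH mulSnr big_split_ord /=; congr (_ + _).
apply: eq_bigr => t _; have r2_gt0 : (0 < r2)%N by move: (ltn_ord t); lia.
by rewrite divnMDl // modnMDl divn_small // modn_small // addn0.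
Qed.

Lemma in_zspan_mul g1 K1 u g2 K2 v : in_zspan g1 K1 u -> in_zspan g2 K2 v ->
  in_zspan (fun k j => g1 (k %/ K2)%N j * g2 (k %% K2)%N j) (K1 * K2)
           (fun j => u j * v j).
Proof.
case=> a Ha [b Hb]; exists (fun k => a (k %/ K2)%N * b (k %% K2)%N) => j.
rewrite Ha Hb mulr_suml -(sum_ord_divn_modn K1 K2 (fun l l' => a l * b l' * (g1 l j * g2 l' j))).
by apply: eq_bigr => l _; rewrite mulr_sumr; apply: eq_bigr => l' _; rewrite mulrACA.
Qed.

Lemma monic_rec_mul f g : monic_rec f -> monic_rec g -> monic_rec (fun j => f j * g j).
Proof.
move=> /monic_rec_shifts [K1 [g1 H1]] /monic_rec_shifts [K2 [g2 H2]].
apply/linrec_monic_rec/(shifts_in_zspan_linrec (K := K1 * K2)) => i.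
exact: in_zspan_mul (H1 i) (H2 i).
Qed.

Record lrseq := LRSeq { lrs : nat -> int; lrsP : monic_rec lrs }.

HB.instance Definition _ := gen_eqMixin lrseq.
HB.instance Definition _ := gen_choiceMixin lrseq.

Lemma lrs_inj : injective lrs.
Proof.
case=> f fP [g gP] /= eq_fg; subst g.
by rewrite (Prop_irrelevance fP gP).
Qed.

Lemma lrs_ext (x y : lrseq) : (forall n, lrs x n = lrs y n) -> x = y.
Proof. by move=> eq_xy; apply/lrs_inj/funext. Qed.

Definition lrs_zero := LRSeq monic_rec0.
Definition lrs_opp (x : lrseq) := LRSeq (monic_rec_opp (lrsP x)).
Definition lrs_add (x y : lrseq) := LRSeq (monic_rec_add (lrsP x) (lrsP y)).
Definition lrs_one := LRSeq monic_rec1.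
Definition lrs_mul (x y : lrseq) := LRSeq (monic_rec_mul (lrsP x) (lrsP y)).

Lemma lrs_addA : associative lrs_add.
Proof. by move=> x y z; apply: lrs_ext => n /=; rewrite addrA. Qed.
Lemma lrs_addC : commutative lrs_add.
Proof. by move=> x y; apply: lrs_ext => n /=; rewrite addrC. Qed.
Lemma lrs_add0 : left_id lrs_zero lrs_add.
Proof. by move=> x; apply: lrs_ext => n /=; rewrite add0r. Qed.
Lemma lrs_addN : left_inverse lrs_zero lrs_opp lrs_add.
Proof. by move=> x; apply: lrs_ext => n /=; rewrite addNr. Qed.

HB.instance Definition _ := GRing.isZmodule.Build lrseq lrs_addA lrs_addC lrs_add0 lrs_addN.

Lemma lrs_mulA : associative lrs_mul.
Proof. by move=> x y z; apply: lrs_ext => n /=; rewrite mulrA. Qed.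
Lemma lrs_mulC : commutative lrs_mul.
Proof. by move=> x y; apply: lrs_ext => n /=; rewrite mulrC. Qed.
Lemma lrs_mul1 : left_id lrs_one lrs_mul.
Proof. by move=> x; apply: lrs_ext => n /=; rewrite mul1r. Qed.
Lemma lrs_mulDl : left_distributive lrs_mul lrs_add.
Proof. by move=> x y z; apply: lrs_ext => n /=; rewrite mulrDl. Qed.

HB.instance Definition _ :=
  GRing.Zmodule_isComPzRing.Build lrseq lrs_mulA lrs_mulC lrs_mul1 lrs_mulDl.

Lemma lrs_sum n (I : Type) (r : seq I) (P : pred I) (E : I -> lrseq) :
  lrs (\sum_(i <- r | P i) E i) n = \sum_(i <- r | P i) lrs (E i) n.
Proof. exact: (additive_sum (F := fun x : lrseq => lrs x n)). Qed.

Lemma lrsMz (x : lrseq) c n : lrs (x *~ c) n = lrs x n * c.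
Proof. by rewrite (additiveMz (F := fun x : lrseq => lrs x n)) // mulrzz. Qed.

Definition lrs_ann (x : lrseq) : {poly int} := projT1 (cid2 (lrsP x)).

Lemma lrs_ann_monic x : lrs_ann x \is monic.
Proof. exact: (projT2 (cid2 (lrsP x))).1. Qed.

Lemma lrs_annP x : ann (lrs_ann x) (lrs x).
Proof. exact: (projT2 (cid2 (lrsP x))).2. Qed.

Lemma common_monic_ann (xs : seq lrseq) :
  exists2 M, M \is monic & {in xs, forall x, ann M (lrs x)}.
Proof.
exists (\prod_(y <- xs) lrs_ann y); first by apply: monic_prod => y _; apply: lrs_ann_monic.
elim: xs => // y xs IH x; rewrite in_cons big_cons => /predU1P [-> | /IH].
  exact/ann_mulr/lrs_annP.
exact: ann_mull.
Qed.

Definition lrs_rmodp_coef m (m_monic : m \is monic) l : lrseq :=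
  LRSeq (ex_intro2 _ _ m m_monic (ann_rmodp_coef m_monic l)).

Definition lrs_shift k (x : lrseq) : lrseq := LRSeq (monic_rec_shift k (lrsP x)).

Definition lrs_comul (x : lrseq) : seq (lrseq * lrseq) :=
  [seq (lrs_shift l x, lrs_rmodp_coef (lrs_ann_monic x) l)
  | l <- index_iota 0 (size (lrs_ann x)).-1].

Definition lrs_counit (x : lrseq) : int := lrs x 0.

Lemma lrs_comulE x i j :
  lrs x (i + j) = \sum_(p <- lrs_comul x) lrs p.1 i * lrs p.2 j.
Proof.
rewrite big_map big_mkord.
have := ann_expand (lrs_ann_monic x) (ann_shift i (lrs_annP x)) j; rewrite /shift => ->.
by apply: eq_bigr => l _; rewrite /= addnC.
Qed.

Section Expansion.
Variables (M : {poly int}) (M_monic : M \is monic).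
Local Notation r := (size M).-1.
Local Notation d := (lrs_rmodp_coef M_monic).

Lemma lrs_expand x : ann M (lrs x) -> x = \sum_(l < r) d l *~ lrs x l.
Proof.
move=> Hx; apply: lrs_ext => n; rewrite lrs_sum (ann_expand M_monic Hx n).
by apply: eq_bigr => l _; rewrite lrsMz mulrC.
Qed.

Lemma sum_additive_expand (T : eqType) (W : zmodType) (u : seq T)
    (G : T -> lrseq) (F : T -> lrseq -> W) :
  (forall p, {morph F p : x y / x + y}) -> {in u, forall p, ann M (lrs (G p))} ->
  \sum_(p <- u) F p (G p) = \sum_(l < r) \sum_(p <- u) F p (d l) *~ lrs (G p) l.
Proof.
move=> F_add annG; rewrite exchange_big /= !big_seq; apply: eq_bigr => p /annG Hp.
rewrite {1}(lrs_expand Hp) additive_sum //.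
by apply: eq_bigr => l _; rewrite additiveMz.
Qed.

End Expansion.

Lemma teq2_lrs (s t : seq (lrseq * lrseq)) :
  (forall i j, \sum_(p <- s) lrs p.1 i * lrs p.2 j = \sum_(p <- t) lrs p.1 i * lrs p.2 j) ->
  teq2 s t.
Proof.
move=> H W b [b1 b2].
have [M M_monic annM] := common_monic_ann ([seq p.1 | p <- s ++ t] ++ [seq p.2 | p <- s ++ t]).
pose d := lrs_rmodp_coef M_monic.
suff expand u : {subset u <= s ++ t} -> \sum_(p <- u) b p.1 p.2 =
    \sum_(l' < (size M).-1) \sum_(l < (size M).-1)
      b (d l) (d l') *~ \sum_(p <- u) lrs p.1 l * lrs p.2 l'.
  rewrite expand => [|p ps]; last by rewrite mem_cat ps.
  rewrite expand => [|p pt]; last by rewrite mem_cat pt orbT.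
  by apply: eq_bigr => l' _; apply: eq_bigr => l _; rewrite H.
move=> sub_u.
rewrite (@sum_additive_expand _ M_monic _ _ _ snd (fun p y => b p.1 y))
  => [||p /sub_u pst]; last 2 first.
- by move=> p y z; rewrite b2.
- by apply: annM; rewrite mem_cat map_f ?orbT.
apply: eq_bigr => l' _.
rewrite (@sum_additive_expand _ M_monic _ _ _ fst (fun p x => b x (d l') *~ lrs p.2 l'))
  => [||p /sub_u pst]; last 2 first.
- by move=> p x y; rewrite b1 mulrzDl.
- by apply: annM; rewrite mem_cat map_f.
apply: eq_bigr => l _; rewrite mulrz_sumr; apply: eq_bigr => p _.
by rewrite mulrzA_C.
Qed.

Lemma teq3_lrs (s t : seq (lrseq * lrseq * lrseq)) :
  (forall i j k, \sum_(p <- s) lrs p.1.1 i * lrs p.1.2 j * lrs p.2 k =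
                 \sum_(p <- t) lrs p.1.1 i * lrs p.1.2 j * lrs p.2 k) ->
  teq3 s t.
Proof.
move=> H W b [b1 [b2 b3]].
have [M M_monic annM] := common_monic_ann
  ([seq p.1.1 | p <- s ++ t] ++ [seq p.1.2 | p <- s ++ t] ++ [seq p.2 | p <- s ++ t]).
pose d := lrs_rmodp_coef M_monic.
suff expand u : {subset u <= s ++ t} -> \sum_(p <- u) b p.1.1 p.1.2 p.2 =
    \sum_(l'' < (size M).-1) \sum_(l' < (size M).-1) \sum_(l < (size M).-1)
      b (d l) (d l') (d l'') *~ \sum_(p <- u) lrs p.1.1 l * lrs p.1.2 l' * lrs p.2 l''.
  rewrite expand => [|p ps]; last by rewrite mem_cat ps.
  rewrite expand => [|p pt]; last by rewrite mem_cat pt orbT.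
  by apply: eq_bigr => l'' _; apply: eq_bigr => l' _; apply: eq_bigr => l _; rewrite H.
move=> sub_u.
rewrite (@sum_additive_expand _ M_monic _ _ _ snd (fun p z => b p.1.1 p.1.2 z))
  => [||p /sub_u pst]; last 2 first.
- by move=> p y z; rewrite b3.
- by apply: annM; rewrite !mem_cat (map_f (fun q => q.2) pst) !orbT.
apply: eq_bigr => l'' _.
rewrite (@sum_additive_expand _ M_monic _ _ _ (fun p => p.1.2)
          (fun p y => b p.1.1 y (d l'') *~ lrs p.2 l'')) => [||p /sub_u pst]; last 2 first.
- by move=> p x y; rewrite b2 mulrzDl.
- by apply: annM; rewrite !mem_cat (map_f (fun q => q.1.2) pst) orbT.
apply: eq_bigr => l' _.
rewrite (@sum_additive_expand _ M_monic _ _ _ (fun p => p.1.1)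
          (fun p x => b x (d l') (d l'') *~ lrs p.2 l'' *~ lrs p.1.2 l'))
  => [||p /sub_u pst]; last 2 first.
- by move=> p x y; rewrite b1 !mulrzDl.
- by apply: annM; rewrite mem_cat (map_f (fun q => q.1.1) pst).
apply: eq_bigr => l _; rewrite mulrz_sumr; apply: eq_bigr => p _.
by rewrite !mulrzA_C; congr (_ *~ _); ring.
Qed.

Lemma lrs_biring_axioms : biring_axioms lrs_comul lrs_counit.
Proof.
split.
- move=> x n n_gt0 /(congr1 (fun y => lrs y)) xn0; apply: lrs_ext => k.
  have /eqP := congr1 (fun f => f k) xn0.
  rewrite /= (additiveMn (F := fun y : lrseq => lrs y k)) // -mulr_natr mulf_eq0.
  by rewrite pnatr_eq0 (gtn_eqF n_gt0) orbF => /eqP.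
- by [].
- split; [|split].
  + by move=> x y; apply: teq2_lrs => i j; rewrite big_cat -!lrs_comulE.
  + by apply: teq2_lrs => i j; rewrite -lrs_comulE big_cons big_nil /= mulr1 addr0.
  + move=> x y; apply: teq2_lrs => i j; rewrite -lrs_comulE big_allpairs_dep /=.
    rewrite !lrs_comulE mulr_suml; apply: eq_bigr => p _.
    by rewrite mulr_sumr; apply: eq_bigr => q _; rewrite mulrACA.
- move=> x; split; apply: lrs_ext => n; rewrite lrs_sum.
  + have := lrs_comulE x 0 n; rewrite add0n => ->.
    by apply: eq_bigr => p _; rewrite lrsMz mulrC.
  + have := lrs_comulE x n 0; rewrite addn0 => ->.
    by apply: eq_bigr => p _; rewrite lrsMz.
- move=> x; apply: teq3_lrs => i j k; rewrite !big_allpairs_dep /=.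
  transitivity (lrs x (i + j + k)).
    by rewrite lrs_comulE; apply: eq_bigr => p _; rewrite lrs_comulE mulr_suml.
  rewrite -addnA lrs_comulE; apply: eq_bigr => p _; rewrite lrs_comulE mulr_sumr.
  by apply: eq_bigr => q _; rewrite mulrA.
Qed.

Definition lrs_biring : biring := BiRing lrs_biring_axioms.

Section Cofree.
Variables (B : biring) (phi : B -> int).
Hypothesis phi_ring : ring_hom_to_Z phi.

Let phiD : {morph phi : x y / x + y}. Proof. by case: phi_ring. Qed.

(* conv_pow n = phi^{*n}, the n-th convolution power, with phi^{*0} = counit. *)
Fixpoint conv_pow (n : nat) (x : B) : int :=
  if n is k.+1 then \sum_(p <- br_D x) phi p.1 * conv_pow k p.2 else br_e x.

Lemma conv_powD n : {morph conv_pow n : x y / x + y}.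
Proof.
case: (br_ax B) => _ [counitD _] [comulD _] _ _.
elim: n => [|n IH] x y /=; first exact: counitD.
rewrite (comulD x y _ (fun a c => phi a * conv_pow n c)) ?big_cat //.
by split => a b c; rewrite ?phiD ?IH ?mulrDl ?mulrDr.
Qed.

Lemma conv_pow_split i j x :
  conv_pow (i + j) x = \sum_(p <- br_D x) conv_pow i p.1 * conv_pow j p.2.
Proof.
case: (br_ax B) => _ _ _ counit_comul coassoc.
elim: i x => [|i IH] x.
  rewrite add0n -[in LHS](counit_comul x).1 additive_sum; last exact: conv_powD.
  by apply: eq_bigr => p _; rewrite additiveMz ?mulrzz 1?mulrC //; apply: conv_powD.
transitivity (\sum_(p <- [seq (p.1, q.1, q.2) | p <- br_D x, q <- br_D p.2])
                 phi p.1.1 * conv_pow i p.1.2 * conv_pow j p.2).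
  rewrite addSn /= big_allpairs_dep /=; apply: eq_bigr => p _.
  by rewrite IH mulr_sumr; apply: eq_bigr => q _; rewrite mulrA.
rewrite -(coassoc x _ (fun a b c => phi a * conv_pow i b * conv_pow j c)).
  by rewrite big_allpairs_dep /=; apply: eq_bigr => p _; rewrite mulr_suml.
by split; [|split] => a b c d; rewrite ?phiD ?conv_powD ?mulrDl ?mulrDr ?mulrDl.
Qed.

Lemma conv_pow1 n : conv_pow n 1 = 1.
Proof.
case: (br_ax B) => _ [_ [counit1 _]] [_ [comul1 _]] _ _.
elim: n => [|n IH] /=; first exact: counit1.
rewrite (comul1 _ (fun a c => phi a * conv_pow n c)).
  by rewrite big_cons big_nil /= IH mulr1 addr0; case: phi_ring => _ [].
by split => a b c; rewrite ?phiD ?conv_powD ?mulrDl ?mulrDr.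
Qed.

Lemma conv_powM n x y : conv_pow n (x * y) = conv_pow n x * conv_pow n y.
Proof.
case: (br_ax B) => _ [_ [_ counitM]] [_ [_ comulM]] _ _.
elim: n x y => [|n IH] x y /=; first exact: counitM.
rewrite (comulM x y _ (fun a c => phi a * conv_pow n c)).
  rewrite big_allpairs_dep /= mulr_suml; apply: eq_bigr => p _.
  rewrite mulr_sumr; apply: eq_bigr => q _; rewrite IH.
  by case: phi_ring => _ [_ ->]; rewrite mulrACA.
by split => a b c; rewrite ?phiD ?conv_powD ?mulrDl ?mulrDr.
Qed.

Lemma monic_rec_conv_pow x : monic_rec (conv_pow^~ x).
Proof.
apply/linrec_monic_rec/(shifts_in_zspan_linrec (K := size (br_D x))
  (g := fun k j => conv_pow j (nth (0, 0) (br_D x) k).2)) => i.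
exists (fun k => conv_pow i (nth (0, 0) (br_D x) k).1) => j.
by rewrite /shift conv_pow_split (big_nth (0, 0)) big_mkord.
Qed.

Definition cofree_map (x : B) : lrs_biring := LRSeq (monic_rec_conv_pow x).

Lemma cofree_map_hom : biring_hom cofree_map.
Proof.
split.
- by move=> x y; apply: lrs_ext => n /=; rewrite conv_powD.
- by apply: lrs_ext => n /=; rewrite conv_pow1.
- by move=> x y; apply: lrs_ext => n /=; rewrite conv_powM.
- by [].
- move=> x; apply: teq2_lrs => i j; rewrite -lrs_comulE big_map /=.
  exact: conv_pow_split.
Qed.

Lemma cofree_map1 b : lrs (cofree_map b) 1 = phi b.
Proof.
case: (br_ax B) => _ _ _ counit_comul _.
rewrite /= -[in RHS](counit_comul b).2 additive_sum //.
by apply: eq_bigr => p _; rewrite additiveMz ?mulrzz.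
Qed.

(* Psi(b)_{1+n} = \sum Psi(b')_1 Psi(b'')_n is the recursion defining conv_pow. *)
Lemma cofree_map_unique (Psi : B -> lrs_biring) :
  biring_hom Psi -> (forall b, lrs (Psi b) 1 = phi b) -> forall b, Psi b = cofree_map b.
Proof.
case=> _ _ _ Psi_counit Psi_comul Psi1 b; apply: lrs_ext => n.
elim: n b => [|n IH] b; first exact: Psi_counit.
rewrite -add1n lrs_comulE.
rewrite (Psi_comul b _ (fun u v : lrs_biring => lrs u 1 * lrs v n)).
  by rewrite big_map /=; apply: eq_bigr => p _; rewrite Psi1 IH.
by split => u v w /=; rewrite ?mulrDl ?mulrDr.
Qed.

End Cofree.

Theorem mainTheorem2 :
  (forall f : nat -> int, ZtO f <-> linrec f) /\
  exists (L : biring) (iota : L -> nat -> int),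
    [/\ (* L is identified with Z[t]^o, sequences f_n = f(t^n) *)
        injective iota /\ (forall f, ZtO f <-> exists x, iota x = f),
        (* ring structure: Hadamard product, unit (1,1,1,...) *)
        (forall (x y : L) n, iota (x + y) n = iota x n + iota y n) /\
        (forall (x y : L) n, iota (x * y) n = iota x n * iota y n) /\
        (forall n, iota 1 n = 1),
        (* co-ring structure dual to the multiplication of Z[t] *)
        (forall x : L, @br_e L x = iota x 0%N) /\
        (forall (x : L) (i j : nat),
           iota x (i + j)%N = \sum_(p <- @br_D L x) iota p.1 i * iota p.2 j)
      & (* cofreeness on Z, with counit pi(f) = f_1 *)
        forall (B : biring) (phi : B -> int), ring_hom_to_Z phi ->
          exists Phi : B -> L,
            (biring_hom Phi /\ forall b, iota (Phi b) 1%N = phi b) /\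
            forall Psi : B -> L,
              biring_hom Psi -> (forall b, iota (Psi b) 1%N = phi b) ->
              forall b, Psi b = Phi b].
Proof.
split; first exact: ZtO_linrec.
exists lrs_biring, lrs; split => //.
- split; first exact: lrs_inj.
  move=> f; split => [/ZtO_monic_rec f_rec | [x <-]]; last exact/monic_rec_ZtO/lrsP.
  by exists (LRSeq f_rec).
- by split => // x i j; apply: lrs_comulE.
- move=> B phi phi_ring; exists (cofree_map phi_ring).
  split; first by split; [apply: cofree_map_hom | apply: cofree_map1].
  by move=> Psi; apply: cofree_map_unique.
Qed.
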